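(* Let $E$ be a complex vector space of dimension $e$, let $U$ be a complex symplectic vector space of dimension $2k$ ($k\ge1$), and let $V=\operatorname{Sym}(E\otimes U)$ with the commuting actions of $\mathfrak{g}=\mathfrak{sp}(U)$ and $H=\mathfrak{gl}(E)$. Write $U=(U_1\oplus U_1^* )\oplus\cdots\oplus(U_k\oplus U_k^* )$ with $U_i,U_i^*$ lines such that the form pairs $U_i$ with $U_i^*$ and the summands $U_i\oplus U_i^*$ are mutually orthogonal; let the Cartan subalgebra of $\mathfrak{sp}(U)$ be the elements preserving each of these lines, and identify a weight $\chi$ with the $k$-tuple $(\chi_1,\dots,\chi_k)$ where $\varepsilon_i$ is the weight on $U_i$ (so $-\varepsilon_i$ is the weight on $U_i^*$). For $n\in\mathbf{Z}$ let $L_n=\bigoplus_{d\ge0}\operatorname{Sym}^d(E)\otimes\operatorname{Sym}^{d+n}(E)$ (with $\operatorname{Sym}^m=0$ for $m<0$). Then for every $\chi\in\mathbf{Z}^k$, as $H$-representations, \[ V_\chi\cong L_{\chi_1}\otimes\cdots\otimes L_{\chi_k}. \]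
   Context: $V_\chi$ denotes the $\chi$-weight space of $V$ for the Cartan subalgebra described in the claim. *)

From HB Require Import structures.
From mathcomp Require Import all_boot all_order all_algebra.
From mathcomp Require Import mpoly.
Set Implicit Arguments. Unset Strict Implicit. Unset Printing Implicit Defensive.
Import Order.TTheory GRing.Theory Num.Theory.
Local Open Scope ring_scope.

(* E = C^e with standard basis (eps_a)_{a<e};
   U = C^(k+k) with basis u_j; u_i (i<k, index lshift k i) spans U_i and
   u_{k+i} (index rshift k i) spans U_i^*; standard symplectic form J.
   V = Sym(E (x) U) = polynomial ring in the variables x_{a,j} = eps_a (x) u_j. *)
Section Defs.
Variables (C : numClosedFieldType) (e k : nat).

Definition Vsp := {mpoly C[e * (k + k)]}.
Definition xi (a : 'I_e) (j : 'I_(k + k)) : 'I_(e * (k + k)) := mxvec_index a j.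
Definition xv (a : 'I_e) (j : 'I_(k + k)) : Vsp := 'X_(xi a j).

(* gl(U) acts on E (x) U by id (x) A, u_j |-> sum_l A l j u_l,
   extended to Sym(E (x) U) as a derivation *)
Definition glU_act (A : 'M[C]_(k + k)) (p : Vsp) : Vsp :=
  \sum_(a < e) \sum_(j < k + k) \sum_(l < k + k) (A l j *: (xv a l * p^`M(xi a j))).

(* gl(E) acts on E (x) U by B (x) id, eps_a |-> sum_b B b a eps_b,
   extended to Sym(E (x) U) as a derivation *)
Definition glE_act (B : 'M[C]_e) (p : Vsp) : Vsp :=
  \sum_(a < e) \sum_(b < e) \sum_(j < k + k) (B b a *: (xv b j * p^`M(xi a j))).

Definition Jform : 'M[C]_(k + k) := block_mx 0 1%:M (- 1%:M) 0.

Definition in_sp (A : 'M[C]_(k + k)) : Prop := A^T *m Jform + Jform *m A = 0.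

(* Cartan subalgebra: elements of sp(U) preserving each line U_i, U_i^*
   (i.e. each basis line C u_j) *)
Definition in_cartan (h : 'M[C]_(k + k)) : Prop :=
  in_sp h /\ forall j l : 'I_(k + k), j != l -> h l j = 0.

(* chi = sum_i chi_i eps_i, where eps_i(h) = eigenvalue of h on U_i *)
Definition weight_val (chi : 'I_k -> int) (h : 'M[C]_(k + k)) : C :=
  \sum_(i < k) (chi i)%:~R * h (lshift k i) (lshift k i).

Definition weight_space (chi : 'I_k -> int) (p : Vsp) : Prop :=
  forall h, in_cartan h -> glU_act h p = weight_val chi h *: p.

(* Target: k copies of Sym(E) (x) Sym(E), realized as the polynomial ring in
   variables y_{i,a} (first factor Sym(E)) and z_{i,a} (second factor),
   i < k, a < e.  A tensor product of subspaces living in disjoint sets of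
   variables is realized as the span of the products. *)
Definition Wsp := {mpoly C[k * (e + e)]}.
Definition yi (i : 'I_k) (a : 'I_e) : 'I_(k * (e + e)) := mxvec_index i (lshift e a).
Definition zi (i : 'I_k) (a : 'I_e) : 'I_(k * (e + e)) := mxvec_index i (rshift e a).
Definition yv i a : Wsp := 'X_(yi i a).
Definition zv i a : Wsp := 'X_(zi i a).

(* L_n = (+)_{d>=0} Sym^d(E) (x) Sym^{d+n}(E), in the i-th pair of variable sets:
   polynomials in the y_{i,.}, z_{i,.} only, each monomial of which has
   z-degree = y-degree + n. *)
Definition L_sub (i : 'I_k) (n : int) (q : Wsp) : Prop :=
  forall m : 'X_{1..k * (e + e)}, m \in msupp q ->
    (forall v : 'I_(k * (e + e)),
       (forall a, v != yi i a) -> (forall a, v != zi i a) -> m v = 0%N) /\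
    (((\sum_(a < e) m (zi i a))%N)%:Z = ((\sum_(a < e) m (yi i a))%N)%:Z + n).

Definition L_tensor (chi : 'I_k -> int) (q : Wsp) : Prop :=
  exists s : seq {ffun 'I_k -> Wsp},
    (forall f, f \in s -> forall i, L_sub i (chi i) (f i)) /\
    q = \sum_(f <- s) \prod_(i < k) f i.

Definition glE_actW (B : 'M[C]_e) (q : Wsp) : Wsp :=
  \sum_(i < k) \sum_(a < e) \sum_(b < e)
     (B b a *: (yv i b * q^`M(yi i a) + zv i b * q^`M(zi i a))).

End Defs.

From HB Require Import structures.
From mathcomp Require Import all_boot all_order all_algebra.
From mathcomp Require Import mpoly.
Import Order.TTheory GRing.Theory Num.Theory.
Local Open Scope ring_scope.
Set Implicit Arguments. Unset Strict Implicit. Unset Printing Implicit Defensive.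

(* Sym(E (x) U) is the polynomial ring in the variables x_{a,j} = eps_a (x) u_j.
   A diagonal h in sp(U) acts on a monomial by the scalar sum_j h_jj deg_j, where
   deg_j is the degree in the variables of column j; as h_{k+i,k+i} = - h_ii, the
   weight space V_chi is spanned by the monomials whose U_i-degree minus
   U_i^*-degree is chi_i for every i.  Renaming x_{a,u_i} to z_{i,a} and
   x_{a,u_i^*} to y_{i,a} is a gl(E)-equivariant algebra isomorphism onto the
   polynomial ring of k copies of Sym E (x) Sym E, and it sends these monomials
   exactly to the products over i of monomials of L_{chi_i}. *)

Definition mxvec_unindex m n (v : 'I_(m * n)) : 'I_m * 'I_n :=
  enum_val (cast_ord (esym (mxvec_cast m n)) v).

Lemma mxvec_indexK m n (i : 'I_m) (j : 'I_n) : mxvec_unindex (mxvec_index i j) = (i, j).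
Proof. by rewrite /mxvec_unindex /mxvec_index cast_ordK enum_rankK. Qed.

Definition mnm_comap n n' (t : 'I_n' -> 'I_n) (m : 'X_{1..n}) : 'X_{1..n'} :=
  [multinom m (t w) | w < n'].

Definition mrename (R : comNzRingType) n n' (s : 'I_n -> 'I_n') (p : {mpoly R[n]}) :
  {mpoly R[n']} := mmap (@mpolyC _ R) (fun v => 'X_(s v)) p.

Lemma mnm_comapK n n' (s : 'I_n -> 'I_n') t :
  cancel s t -> cancel (mnm_comap t) (mnm_comap s).
Proof. by move=> sK m; apply/mnmP => v; rewrite !mnmE sK. Qed.

Lemma mrename_is_linear (R : comNzRingType) n n' (s : 'I_n -> 'I_n') :
  linear (@mrename R n n' s).
Proof. by move=> c p q; rewrite /mrename mmapD mmapZ mul_mpolyC. Qed.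

HB.instance Definition _ (R : comNzRingType) n n' (s : 'I_n -> 'I_n') :=
  GRing.isLinear.Build R {mpoly R[n]} {mpoly R[n']} *:%R (mrename s)
    (mrename_is_linear s).

Section Rename.
Variables (R : comNzRingType) (n n' : nat).
Implicit Types (p q : {mpoly R[n]}).

Lemma mrenameM (s : 'I_n -> 'I_n') p q : mrename s (p * q) = mrename s p * mrename s q.
Proof. exact: rmorphM. Qed.

Lemma mrenameU (s : 'I_n -> 'I_n') v : mrename s ('X_v : {mpoly R[n]}) = 'X_(s v).
Proof. by rewrite /mrename mmapX mmap1U. Qed.

Variables (s : 'I_n -> 'I_n') (t : 'I_n' -> 'I_n).
Hypotheses (sK : cancel s t) (tK : cancel t s).

Lemma mrenameX m : mrename s ('X_[m] : {mpoly R[n]}) = 'X_[mnm_comap t m].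
Proof.
rewrite /mrename mmapX /mmap1 mpolyXE_id (reindex s) /=; last first.
  by exists t => v _; rewrite ?sK ?tK.
by apply: eq_bigr => v _; rewrite mnmE sK.
Qed.

Lemma mcoeff_mrename p m : (mrename s p)@_m = p@_(mnm_comap s m).
Proof.
rewrite {1}[p]mpolyE (raddf_sum (mrename s)) raddf_sum [in RHS](mpolyE p) raddf_sum /=.
apply: eq_bigr => m' _; rewrite linearZ /= mrenameX !mcoeffZ !mcoeffX.
by rewrite (can2_eq (mnm_comapK sK) (mnm_comapK tK)).
Qed.

Lemma msupp_mrename p m : (m \in msupp (mrename s p)) = (mnm_comap s m \in msupp p).
Proof. by rewrite !mcoeff_msupp mcoeff_mrename. Qed.

Lemma mrename_mderiv p v : mrename s (p^`M(v)) = (mrename s p)^`M(s v).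
Proof.
apply/mpolyP => m; rewrite mcoeff_mrename !mcoeff_mderiv mcoeff_mrename mnmE.
by congr (p@_ _ *+ _); apply/mnmP => u; rewrite !mnmE (inj_eq (can_inj sK)).
Qed.

End Rename.

Lemma mrenameK (R : comNzRingType) n n' (s : 'I_n -> 'I_n') t :
  cancel s t -> cancel t s -> cancel (@mrename R _ _ s) (mrename t).
Proof.
move=> sK tK p; apply/mpolyP => m.
by rewrite (mcoeff_mrename tK sK) (mcoeff_mrename sK tK) (mnm_comapK sK).
Qed.

Lemma mcoeff_mulX_mderiv (R : comNzRingType) n (v : 'I_n) (p : {mpoly R[n]}) m :
  ('X_v * p^`M(v))@_m = (m v)%:R * p@_m.
Proof.
have [mv0|mv_gt0] := posnP (m v).
  rewrite mv0 mul0r {1}(mpolyE (p^`M(v))) mulr_sumr raddf_sum /= big1 // => m' _.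
  rewrite -scalerAr -mpolyXD mcoeffZ mcoeffX.
  case: eqP => [Em|_]; last by rewrite mulr0.
  by move: mv0; rewrite -Em mnmDE mnm1E eqxx add1n.
have Em : (U_(v) + (m - U_(v)))%MM = m.
  apply/mnmP => u; rewrite mnmDE mnmBE mnm1E.
  by case: eqP => [<-|_]; rewrite ?subn0 // subnKC.
rewrite -{1}Em mpoly_mulC mcoeffMX mcoeff_mderiv addmC Em mnmBE mnm1E eqxx subn1.
by rewrite prednK // mulr_natl.
Qed.

Section Symplectic.
Variables (C : numClosedFieldType) (k : nat).
Local Notation J := (Jform C k).

Lemma Jform_ll i j : J (lshift k i) (lshift k j) = 0.
Proof. by rewrite /Jform block_mxEul mxE. Qed.
Lemma Jform_lr i j : J (lshift k i) (rshift k j) = (i == j)%:R.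
Proof. by rewrite /Jform block_mxEur mxE. Qed.
Lemma Jform_rl i j : J (rshift k i) (lshift k j) = - (i == j)%:R.
Proof. by rewrite /Jform block_mxEdl !mxE. Qed.
Lemma Jform_rr i j : J (rshift k i) (rshift k j) = 0.
Proof. by rewrite /Jform block_mxEdr mxE. Qed.

Definition JformE := (Jform_ll, Jform_lr, Jform_rl, Jform_rr).

Lemma diag_mx_in_spE (d : 'rV[C]_(k + k)) :
  in_sp (diag_mx d) <-> forall i, d 0 (rshift k i) = - d 0 (lshift k i).
Proof.
rewrite /in_sp tr_diag_mx mul_diag_mx mul_mx_diag [J]lock.
split => [/matrixP Hd i | Hd].
  have := Hd (lshift k i) (rshift k i); rewrite !mxE -lock Jform_lr eqxx mulr1 mul1r.
  by move/eqP; rewrite addrC addr_eq0 => /eqP.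
apply/matrixP => x y; rewrite !mxE [d 0 x * _]mulrC -mulrDr -lock.
case: (split_ordP x) => i ->; case: (split_ordP y) => j ->; rewrite !JformE ?mul0r //;
  by have [<-|_] := eqVneq i j; rewrite ?Hd ?subrr ?addNr ?mulr0 ?mulr0n ?oppr0 ?mul0r.
Qed.

Lemma diag_mx_in_cartan (d : 'rV[C]_(k + k)) :
  (forall i, d 0 (rshift k i) = - d 0 (lshift k i)) -> in_cartan (diag_mx d).
Proof.
by move=> Hd; split=> [|j l jl]; [apply/diag_mx_in_spE | rewrite mxE eq_sym (negPf jl)].
Qed.

Lemma in_cartan_opp (h : 'M[C]_(k + k)) : in_cartan h ->
  forall i, h (rshift k i) (rshift k i) = - h (lshift k i) (lshift k i).
Proof.
case=> hsp hoff; have hdiag : h = diag_mx (\row_j h j j).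
  apply/matrixP => x y; rewrite !mxE.
  by have [->|xy] := eqVneq x y; rewrite ?mulr0n // hoff // eq_sym.
by move: hsp; rewrite {1}hdiag diag_mx_in_spE => Hd i; have := Hd i; rewrite !mxE.
Qed.

Definition sp_coroot (i : 'I_k) : 'M[C]_(k + k) :=
  diag_mx (\row_j ((j == lshift k i)%:R - (j == rshift k i)%:R)).

Lemma sp_coroot_in_cartan i : in_cartan (sp_coroot i).
Proof. by apply: diag_mx_in_cartan => j; rewrite !mxE !eq_shift sub0r subr0. Qed.

Lemma weight_val_coroot (c : 'I_k -> int) i : weight_val c (sp_coroot i) = (c i)%:~R.
Proof.
rewrite /weight_val (bigD1 i) //= big1 => [|j ji]; rewrite !mxE !eq_shift ?eqxx.
  by rewrite subr0 mulr1n mulr1 addr0.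
by rewrite (negPf ji) subr0 mulr0.
Qed.

End Symplectic.

Section Weights.
Variables (C : numClosedFieldType) (e k : nat).
Local Notation V := (Vsp C e k).

Definition udeg (m : 'X_{1..e * (k + k)}) (j : 'I_(k + k)) : nat :=
  \sum_(a < e) m (xi a j).

Definition mnm_weight (m : 'X_{1..e * (k + k)}) (i : 'I_k) : int :=
  (udeg m (lshift k i))%:Z - (udeg m (rshift k i))%:Z.

Lemma mcoeff_glU_diag (h : 'M[C]_(k + k)) (p : V) m :
  (forall j l, j != l -> h l j = 0) ->
  (glU_act h p)@_m = (\sum_j h j j * (udeg m j)%:R) * p@_m.
Proof.
move=> hoff; rewrite /glU_act raddf_sum /=.
under eq_bigr => a _ do rewrite raddf_sum /=.
rewrite exchange_big mulr_suml; apply: eq_bigr => j _ /=.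
rewrite /udeg natr_sum mulr_sumr mulr_suml; apply: eq_bigr => a _.
rewrite raddf_sum /= (bigD1 j) //= big1 ?addr0 => [|l lj]; last first.
  by rewrite hoff ?scale0r ?raddf0 // eq_sym.
by rewrite mcoeffZ mcoeff_mulX_mderiv mulrA.
Qed.

Lemma mcoeff_glU_cartan (h : 'M[C]_(k + k)) (p : V) m : in_cartan h ->
  (glU_act h p)@_m = weight_val (mnm_weight m) h * p@_m.
Proof.
move=> hc; rewrite mcoeff_glU_diag; last by case: hc.
congr (_ * _); rewrite big_split_ord /= /weight_val -big_split /=.
apply: eq_bigr => i _; rewrite in_cartan_opp // rmorphB /=.
by rewrite mulNr -mulrBr mulrC.
Qed.

Lemma weight_spaceP (chi : 'I_k -> int) (p : V) :
  weight_space chi p <-> {in msupp p, forall m i, mnm_weight m i = chi i}.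
Proof.
split=> [Hw m mp i | Hm h hc].
  have := congr1 (mcoeff m) (Hw _ (sp_coroot_in_cartan C i)).
  rewrite mcoeff_glU_cartan; last exact: sp_coroot_in_cartan.
  rewrite [X in _ = X -> _]mcoeffZ !weight_val_coroot => /mulIf.
  by rewrite -mcoeff_msupp => /(_ mp) /intr_inj.
apply/mpolyP => m; rewrite mcoeff_glU_cartan // mcoeffZ.
have [mp|/memN_msupp_eq0 ->] := boolP (m \in msupp p); last by rewrite !mulr0.
by congr (_ * _); apply: eq_bigr => i _; rewrite Hm.
Qed.

End Weights.

Section Blocks.
Variables (C : numClosedFieldType) (e k : nat).
Local Notation W := (Wsp C e k).
Local Notation M := (k * (e + e))%N.

Definition block_of (w : 'I_M) : 'I_k := (mxvec_unindex w).1.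

Lemma block_of_y i a : block_of (yi i a) = i.
Proof. by rewrite /block_of /yi mxvec_indexK. Qed.

Lemma block_of_z i a : block_of (zi i a) = i.
Proof. by rewrite /block_of /zi mxvec_indexK. Qed.

Lemma block_ofP w :
  (exists a, w = yi (block_of w) a) \/ (exists a, w = zi (block_of w) a).
Proof.
case/mxvec_indexP: w => i b; rewrite /block_of mxvec_indexK /=.
by case: (split_ordP b) => a ->; [left | right]; exists a.
Qed.

Lemma block_of_neq w j :
  block_of w != j -> (forall b, w != yi j b) /\ (forall b, w != zi j b).
Proof.
by move=> wj; split=> b; apply: contraNneq wj => ->; rewrite ?block_of_y ?block_of_z.
Qed.

Definition block_weight (m : 'X_{1..M}) (i : 'I_k) : int :=
  (\sum_(a < e) m (zi i a))%N%:Z - (\sum_(a < e) m (yi i a))%N%:Z.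

Lemma block_weight0 i : block_weight 0%MM i = 0.
Proof. by rewrite /block_weight !big1 // => a _; rewrite mnm0E. Qed.

Lemma block_weightD m1 m2 i :
  block_weight (m1 + m2)%MM i = block_weight m1 i + block_weight m2 i.
Proof.
rewrite /block_weight; under eq_bigr => a _ do rewrite mnmDE.
under [in X in _ - X]eq_bigr => a _ do rewrite mnmDE.
by rewrite !big_split /= !PoszD opprD addrACA.
Qed.

Lemma L_sub_weight j n (f : W) m : L_sub j n f -> m \in msupp f ->
  forall i, block_weight m i = if j == i then n else 0.
Proof.
move=> Hf /Hf [Hoff Hdeg] i; have [<-|ji] := eqVneq j i.
  by rewrite /block_weight Hdeg addrAC subrr add0r.
have off_block w : block_of w != j -> m w = 0 by case/block_of_neq; exact: Hoff.
by rewrite /block_weight !big1 // => a _; apply: off_block;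
  rewrite ?block_of_y ?block_of_z eq_sym.
Qed.

Lemma block_weight_prod (chi : 'I_k -> int) (f : 'I_k -> W) (r : seq 'I_k) m :
  (forall j, L_sub j (chi j) (f j)) -> m \in msupp (\prod_(j <- r) f j) ->
  forall i, block_weight m i = \sum_(j <- r) (if j == i then chi j else 0).
Proof.
move=> Hf; elim: r m => [|j r IHr] m.
  by rewrite big_nil -mpolyC1 msupp1 inE => /eqP -> i; rewrite block_weight0 big_nil.
rewrite big_cons => /msuppM_le /allpairsP [[m1 m2] [/= m1f m2f ->]] i.
by rewrite block_weightD (L_sub_weight (Hf j) m1f) (IHr _ m2f) big_cons.
Qed.

Definition mnm_block (i : 'I_k) (m : 'X_{1..M}) : 'X_{1..M} :=
  [multinom if block_of w == i then m w else 0%N | w < M].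

Lemma prod_mnm_block m : \prod_(i < k) ('X_[mnm_block i m] : W) = 'X_[m].
Proof.
rewrite mpolyXE_id; under eq_bigr => i _ do rewrite mpolyXE_id.
rewrite exchange_big /=; apply: eq_bigr => w _.
rewrite (bigD1 (block_of w)) //= big1 ?mulr1 => [|i /negPf iw].
  by rewrite mnmE eqxx.
by rewrite mnmE eq_sym iw expr0.
Qed.

Lemma L_subZ i n c (q : W) : L_sub i n q -> L_sub i n (c *: q).
Proof. by move=> Hq m /msuppZ_le; exact: Hq. Qed.

Lemma L_sub_block i m : L_sub i (block_weight m i) ('X_[mnm_block i m] : W).
Proof.
move=> m'; rewrite msuppX inE => /eqP ->; split=> [w Hy Hz|].
  rewrite mnmE; case: eqP => // iw.
  by case: (block_ofP w) => -[a Ew]; [move: (Hy a) | move: (Hz a)]; rewrite {1}Ew iw eqxx.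
rewrite /block_weight; under eq_bigr => a _ do rewrite mnmE block_of_z eqxx.
under [in RHS]eq_bigr => a _ do rewrite mnmE block_of_y eqxx.
by rewrite addrC subrK.
Qed.

(* [i0] carries the coefficient of each monomial; for k = 0, L_tensor chi only
   contains the constants n%:R. *)
Lemma L_tensorP (chi : 'I_k -> int) (i0 : 'I_k) (q : W) :
  L_tensor chi q <-> {in msupp q, forall m i, block_weight m i = chi i}.
Proof.
split=> [[s [Hs ->]] m | Hq].
  case/msupp_sum_le/flattenP => ms /mapP [f]; rewrite filter_predT => fs -> mf i.
  rewrite (block_weight_prod (Hs f fs) mf) -big_mkcond.
  by rewrite (big_pred1 i) // => j; rewrite eq_sym.
pose factor m : {ffun 'I_k -> W} :=
  [ffun i => (if i == i0 then q@_m else 1) *: 'X_[mnm_block i m]].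
exists [seq factor m | m <- msupp q]; split.
  move=> _ /mapP [m mq ->] i; rewrite ffunE -(Hq m mq i).
  exact/L_subZ/L_sub_block.
rewrite big_map {1}[q]mpolyE; apply: eq_bigr => m _.
under eq_bigr => i _ do rewrite ffunE.
by rewrite scaler_prod prod_mnm_block -big_mkcond big_pred1_eq.
Qed.

End Blocks.

Section Correspondence.
Variables (e k : nat).

Definition var_VW (v : 'I_(e * (k + k))) : 'I_(k * (e + e)) :=
  let: (a, j) := mxvec_unindex v in
  match split j with inl i => zi i a | inr i => yi i a end.

Definition var_WV (w : 'I_(k * (e + e))) : 'I_(e * (k + k)) :=
  let: (i, b) := mxvec_unindex w in
  match split b with inl a => xi a (rshift k i) | inr a => xi a (lshift k i) end.

Lemma var_VW_lshift a i : var_VW (xi a (lshift k i)) = zi i a.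
Proof. by rewrite /var_VW /xi mxvec_indexK (unsplitK (inl _)). Qed.

Lemma var_VW_rshift a i : var_VW (xi a (rshift k i)) = yi i a.
Proof. by rewrite /var_VW /xi mxvec_indexK (unsplitK (inr _)). Qed.

Lemma var_WV_y i a : var_WV (yi i a) = xi a (rshift k i).
Proof. by rewrite /var_WV /yi mxvec_indexK (unsplitK (inl _)). Qed.

Lemma var_WV_z i a : var_WV (zi i a) = xi a (lshift k i).
Proof. by rewrite /var_WV /zi mxvec_indexK (unsplitK (inr _)). Qed.

Lemma var_VWK : cancel var_VW var_WV.
Proof.
case/mxvec_indexP=> a j; case: (split_ordP j) => i ->.
  by rewrite -/(xi a _) var_VW_lshift var_WV_z.
by rewrite -/(xi a _) var_VW_rshift var_WV_y.
Qed.

Lemma var_WVK : cancel var_WV var_VW.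
Proof.
case/mxvec_indexP=> i b; case: (split_ordP b) => a ->.
  by rewrite -/(yi i a) var_WV_y var_VW_rshift.
by rewrite -/(zi i a) var_WV_z var_VW_lshift.
Qed.

Lemma mnm_weight_comap m i : mnm_weight (mnm_comap var_VW m) i = block_weight m i.
Proof.
by congr (Posz _ - Posz _); apply: eq_bigr => a _;
  rewrite mnmE ?var_VW_lshift ?var_VW_rshift.
Qed.

End Correspondence.

Section Isomorphism.
Variables (C : numClosedFieldType) (e k : nat) (chi : 'I_k -> int).
Local Notation V := (Vsp C e k).
Local Notation rename := (@mrename C _ _ (@var_VW e k)).

Lemma weight_space_rename (p : V) :
  weight_space chi p <-> {in msupp (rename p), forall m i, block_weight m i = chi i}.
Proof.
rewrite weight_spaceP; split=> Hp m.
  by rewrite (msupp_mrename (@var_VWK e k) (@var_WVK e k)) => /Hp Hm i;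
    rewrite -mnm_weight_comap.
rewrite -[m](mnm_comapK (@var_VWK e k)) -(msupp_mrename (@var_VWK e k) (@var_WVK e k)).
by move=> /Hp Hm i; rewrite mnm_weight_comap.
Qed.

Lemma mrename_glE (B : 'M[C]_e) (p : V) : rename (glE_act B p) = glE_actW B (rename p).
Proof.
rewrite /glE_act /glE_actW linear_sum [RHS]exchange_big; apply: eq_bigr => a _ /=.
rewrite linear_sum [RHS]exchange_big; apply: eq_bigr => b _ /=.
rewrite linear_sum big_split_ord /= -big_split; apply: eq_bigr => i _ /=.
rewrite !linearZ /= !mrenameM !mrenameU !(mrename_mderiv (@var_VWK e k) (@var_WVK e k)).
by rewrite !var_VW_lshift !var_VW_rshift scalerDr addrC.
Qed.

End Isomorphism.

Theorem mainTheorem3 (C : numClosedFieldType) (e k : nat) (hk : (0 < k)%N)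
  (chi : 'I_k -> int) :
  exists phi : {linear Vsp C e k -> Wsp C e k},
    [/\ (forall p, weight_space chi p -> L_tensor chi (phi p)),
        (forall p1 p2, weight_space chi p1 -> weight_space chi p2 ->
           phi p1 = phi p2 -> p1 = p2),
        (forall q, L_tensor chi q -> exists2 p, weight_space chi p & phi p = q) &
        (forall (B : 'M[C]_e) p, weight_space chi p ->
           phi (glE_act B p) = glE_actW B (phi p))].
Proof.
have tensorP := L_tensorP chi (Ordinal hk).
have renameK := mrenameK (R := C) (@var_VWK e k) (@var_WVK e k).
have unrenameK := mrenameK (R := C) (@var_WVK e k) (@var_VWK e k).
exists (mrename (@var_VW e k)); split.
- by move=> p /weight_space_rename /tensorP.
- by move=> p1 p2 _ _ /(can_inj renameK).
- move=> q /tensorP Hq; exists (mrename (@var_WV e k) q); last exact: unrenameK.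
  by apply/weight_space_rename; rewrite unrenameK.
- by move=> B p _; exact: mrename_glE.
Qed.
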